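(* Let $\mathcal{P}=\{\mathbb{P}_n\}_{n\ge1}$ and $\mathcal{P}'=\{\mathbb{P}'_n\}_{n\ge1}$ be families of probability measures, $\mathbb{P}_n,\mathbb{P}'_n$ on $\mathbb{R}^n$. If $\mathcal{P}'$ has exponential Fisher separability and $\mathcal{P}'$ dominates $\mathcal{P}$, then $\mathcal{P}$ has exponential Fisher separability.
   Context: $\mathcal{P}'$ dominates $\mathcal{P}$ if there is a constant $C$ such that $\mathbb{P}_n(S)\le C\,\mathbb{P}'_n(S)$ for all $n$ and all measurable $S\subset\mathbb{R}^n$. A family $\{\mathbb{P}_n\}$ has exponential Fisher separability if there exist constants $a>0$, $b\in(0,1)$ such that for all $n$, if $\boldsymbol{x},\boldsymbol{y}$ are i.i.d. with law $\mathbb{P}_n$, then $(\boldsymbol{x},\boldsymbol{x})>(\boldsymbol{x},\boldsymbol{y})$ with probability at least $1-ab^n$ ($(\cdot,\cdot)$ the Euclidean inner product). *)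

(* R^n is modelled as n.-tuple R with its library
   product sigma-algebra (generated by the coordinate projections), which is
   the Borel sigma-algebra of R^n. *)
From HB Require Import structures.
From mathcomp Require Import all_boot all_order all_algebra.
From mathcomp Require Import all_classical all_reals all_analysis.
Set Implicit Arguments. Unset Strict Implicit. Unset Printing Implicit Defensive.
Import Order.TTheory GRing.Theory Num.Theory.
Local Open Scope classical_set_scope.
Local Open Scope ring_scope.

Definition dotp (R : realType) (n : nat) (x y : n.-tuple R) : R :=
  \sum_(i < n) tnth x i * tnth y i.

Definition fisher_event (R : realType) (n : nat) : set (n.-tuple R * n.-tuple R) :=
  [set z | dotp z.1 z.2 < dotp z.1 z.1].

(* a family {P_n}_{n>=1} of probability measures on R^n (entries for n = 0 ignored) *)
Definition prob_family (R : realType) := forall n : nat, probability (n.-tuple R) R.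

Definition dominates (R : realType) (P' P : prob_family R) : Prop :=
  exists C : R, forall n : nat, (0 < n)%N ->
    forall S : set (n.-tuple R), measurable S ->
      (P n S <= C%:E * P' n S)%E.

(* exponential Fisher separability: x, y i.i.d. with law P_n, i.e. (x,y) has
   law the product measure P_n \x P_n *)
Definition exp_fisher_separable (R : realType) (P : prob_family R) : Prop :=
  exists a b : R, 0 < a /\ 0 < b < 1 /\
    forall n : nat, (0 < n)%N ->
      ((1 - a * b ^+ n)%:E <= (P n \x P n) (@fisher_event R n))%E.

(* Domination with constant C passes to the product measures with constant C^2
   by integrating the bound over one factor at a time (Tonelli).  Applied to
   the complement of the event (x,x) > (x,y), whose P'_n x P'_n-probability is
   at most a b^n, this bounds its P_n x P_n-probability by (C^2 a) b^n. *)
From HB Require Import structures.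
From mathcomp Require Import all_boot all_order all_algebra.
From mathcomp Require Import all_classical all_reals all_analysis.
From mathcomp Require Import measurable_realfun lra.
Import Order.TTheory GRing.Theory Num.Theory.
Local Open Scope classical_set_scope.
Local Open Scope ring_scope.

Lemma measurable_dotp (R : realType) (n : nat) d (T : measurableType d)
    (f g : T -> n.-tuple R) :
  measurable_fun setT f -> measurable_fun setT g ->
  measurable_fun setT (fun z => dotp (f z) (g z)).
Proof.
move=> mf mg; apply: measurable_sum => i; apply: measurable_funM.
- exact: measurableT_comp (measurable_tnth i) mf.
- exact: measurableT_comp (measurable_tnth i) mg.
Qed.

Lemma measurable_fisher_event (R : realType) (n : nat) :
  measurable (@fisher_event R n).
Proof.
have mlt : measurable_fun setT
    (fun z : n.-tuple R * n.-tuple R => dotp z.1 z.2 < dotp z.1 z.1).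
  by apply: measurable_fun_ltr; apply: measurable_dotp;
    [exact: measurable_fst | exact: measurable_snd | exact: measurable_fst
    | exact: measurable_fst].
by have := mlt measurableT [set true] I; rewrite setTI.
Qed.

Section product_measure_domination.
Local Open Scope ereal_scope.
Context d1 d2 (T1 : measurableType d1) (T2 : measurableType d2) (R : realType).

Lemma product_measure12E (m1 : {sigma_finite_measure set T1 -> \bar R})
    (m2 : {sigma_finite_measure set T2 -> \bar R}) (A : set (T1 * T2)) :
  measurable A -> (m1 \x m2) A = (m1 \x^ m2) A.
Proof.
by move=> mA; apply: product_measure_unique => // B1 B2 mB1 mB2;
  exact: product_measure2E.
Qed.

Variables (m1 m1' : {sigma_finite_measure set T1 -> \bar R}).
Variables (m2 m2' : {sigma_finite_measure set T2 -> \bar R}).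
Variables (c1 c2 : R).
Hypotheses (c1_ge0 : (0 <= c1)%R) (c2_ge0 : (0 <= c2)%R).
Hypothesis m1_dom : forall S, measurable S -> m1 S <= c1%:E * m1' S.
Hypothesis m2_dom : forall S, measurable S -> m2 S <= c2%:E * m2' S.

Lemma product_measure_dominated (A : set (T1 * T2)) : measurable A ->
  (m1 \x m2) A <= (c1 * c2)%:E * (m1' \x m2') A.
Proof.
move=> mA.
have dom_left : (m1 \x m2) A <= c1%:E * (m1' \x m2) A.
  rewrite !product_measure12E // /product_measure2.
  rewrite -ge0_integralZl //; last exact: measurable_fun_ysection.
  apply: ge0_le_integral => //.
  - exact: measurable_fun_ysection.
  - exact/measurable_funeM/measurable_fun_ysection.
  - by move=> y _; apply: m1_dom; exact: measurable_ysection.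
have dom_right : (m1' \x m2) A <= c2%:E * (m1' \x m2') A.
  rewrite /product_measure1 -ge0_integralZl //; last exact: measurable_fun_xsection.
  apply: ge0_le_integral => //.
  - exact: measurable_fun_xsection.
  - exact/measurable_funeM/measurable_fun_xsection.
  - by move=> x _; apply: m2_dom; exact: measurable_xsection.
apply: (le_trans dom_left).
by rewrite EFinM -muleA lee_wpmul2l ?lee_fin.
Qed.

End product_measure_domination.

Section probability_domination.
Local Open Scope ereal_scope.
Context {d} {T : measurableType d} {R : realType} {Q Q' : probability T R}.

Lemma dominating_const_ge1 (C : R) :
  (forall S, measurable S -> Q S <= C%:E * Q' S) -> (1 <= C)%R.
Proof.
by move=> /(_ setT measurableT); rewrite !probability_setT mule1 lee_fin.
Qed.

Lemma dominated_setC_lower_bound (F : set T) (K t : R) : measurable F ->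
  (0 <= K)%R -> Q (~` F) <= K%:E * Q' (~` F) -> (1 - t)%:E <= Q' F ->
  (1 - K * t)%:E <= Q F.
Proof.
move=> mF K_ge0; rewrite !probability_setC //.
rewrite -(fineK (fin_num_measure Q F mF)) -(fineK (fin_num_measure Q' F mF)).
rewrite -!EFinB -EFinM !lee_fin => domFC boundF'.
have : (K * (1 - fine (Q' F)) <= K * t)%R by rewrite ler_wpM2l //; lra.
lra.
Qed.

End probability_domination.

Theorem theorem5 (R : realType) (P P' : prob_family R) :
  exp_fisher_separable P' -> dominates P' P -> exp_fisher_separable P.
Proof.
move=> [a [b [a_gt0 [b01 sepP']]]] [C domC].
have C_ge1 : 1 <= C by apply: dominating_const_ge1 (domC 1%N isT).
have C_ge0 : 0 <= C by apply: le_trans C_ge1.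
exists (C ^+ 2 * a), b; split.
  by rewrite mulr_gt0 // exprn_gt0 // (lt_le_trans ltr01 C_ge1).
split=> // n n_gt0.
have mF := measurable_fisher_event R n.
rewrite -mulrA.
apply: (@dominated_setC_lower_bound _ _ _ _ _ _ (C ^+ 2) (a * b ^+ n) mF _ _
  (sepP' n n_gt0)).
  exact: exprn_ge0.
by rewrite expr2; apply: product_measure_dominated => //;
  [exact: domC | exact: domC | exact: measurableC].
Qed.
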